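(* Let $C\subset\mathbb{R}^n$ be a nonempty closed convex set, let $v\in\mathbb{R}^n$, $u\in C$, and let $\gamma\ge 0$ and $\theta,\lambda\in[0,1/2)$. Let $\varphi_{\gamma,\theta,\lambda}$ be a relative error tolerance function and let $w\in\mathcal{P}_C(\varphi_{\gamma,\theta,\lambda},u,v)$. Then $$\|w-x\|^2\le \|v-x\|^2+\frac{2\gamma+2\lambda}{1-2\lambda}\|v-u\|^2\qquad\text{for all } x\in C.$$
   Context: A relative error tolerance function with forcing parameters $\gamma,\theta,\lambda\ge 0$ is any function $\varphi_{\gamma,\theta,\lambda}:\mathbb{R}^n\times\mathbb{R}^n\times\mathbb{R}^n\to[0,\infty)$ satisfying $\varphi_{\gamma,\theta,\lambda}(u,v,w)\le \gamma\|v-u\|^2+\theta\|w-v\|^2+\lambda\|w-u\|^2$ for all $u,v,w\in\mathbb{R}^n$. For a closed convex set $C$ and $u\in C$, the feasible inexact projection set of $v\in\mathbb{R}^n$ relative to $u$ is $\mathcal{P}_C(\varphi_{\gamma,\theta,\lambda},u,v):=\{w\in C:\ \langle v-w,z-w\rangle\le \varphi_{\gamma,\theta,\lambda}(u,v,w)\ \text{for all } z\in C\}$. *)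

From HB Require Import structures.
From mathcomp Require Import all_boot all_order all_algebra.
From mathcomp Require Import all_classical all_reals all_analysis.
Set Implicit Arguments. Unset Strict Implicit. Unset Printing Implicit Defensive.
Import Order.TTheory GRing.Theory Num.Theory.
Import numFieldNormedType.Exports.
Local Open Scope ring_scope.
Local Open Scope classical_set_scope.

(* R^n is modelled as row vectors 'rV[R]_n over R : realType. *)

Definition dotv (R : realType) (n : nat) (u v : 'rV[R]_n) : R :=
  \sum_(i < n) u 0 i * v 0 i.

Definition sqnorm (R : realType) (n : nat) (u : 'rV[R]_n) : R := dotv u u.

Definition rel_err_tol (R : realType) (n : nat)
  (gamma theta lambda : R) (phi : 'rV[R]_n -> 'rV[R]_n -> 'rV[R]_n -> R) :=
  forall u v w : 'rV[R]_n,
    0 <= phi u v w /\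
    phi u v w <= gamma * sqnorm (v - u) + theta * sqnorm (w - v)
                 + lambda * sqnorm (w - u).

Definition inexact_proj (R : realType) (n : nat) (C : set 'rV[R]_n)
  (phi : 'rV[R]_n -> 'rV[R]_n -> 'rV[R]_n -> R) (u v : 'rV[R]_n)
  : set 'rV[R]_n :=
  [set w | C w /\ forall z, C z -> dotv (v - w) (z - w) <= phi u v w].

From HB Require Import structures.
From mathcomp Require Import all_boot all_order all_algebra.
From mathcomp Require Import all_classical all_reals all_analysis.
From mathcomp Require Import ring lra.
Set Implicit Arguments. Unset Strict Implicit. Unset Printing Implicit Defensive.
Import Order.TTheory GRing.Theory Num.Theory.
Import numFieldNormedType.Exports.
Local Open Scope ring_scope.
Local Open Scope classical_set_scope.

(* Write D = |v-w|^2, E = |w-u|^2, F = |v-u|^2 and P = phi u v w.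
   The polarization identity
        |w-z|^2 = |v-z|^2 - |v-w|^2 + 2 <v-w, z-w>
   together with the defining inequality <v-w, z-w> <= P of the inexact
   projection gives |w-z|^2 <= |v-z|^2 - D + 2P for every z in C.  The
   tolerance bound P <= gamma F + theta D + lambda E with theta < 1/2 lets the
   term -D absorb 2 theta D, hence
        |w-z|^2 <= |v-z|^2 + 2 gamma F + 2 lambda E        (z in C).
   Taking z = u (u lies in C) yields (1 - 2 lambda) E <= (1 + 2 gamma) F, and
   substituting this bound on E back gives the theorem, since
   2 gamma + 2 lambda (1 + 2 gamma) / (1 - 2 lambda)
     = (2 gamma + 2 lambda) / (1 - 2 lambda). *)

Section EuclideanIdentities.
Variables (R : realType) (n : nat).
Implicit Types (a b v w z : 'rV[R]_n).

Lemma sqnorm_ge0 a : 0 <= sqnorm a.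
Proof. by apply: sumr_ge0 => i _; rewrite -expr2 sqr_ge0. Qed.

Lemma sqnormBC a b : sqnorm (a - b) = sqnorm (b - a).
Proof. by apply: eq_bigr => i _; rewrite !mxE; ring. Qed.

Lemma sqnorm_three_point v w z :
  sqnorm (w - z) = sqnorm (v - z) - sqnorm (v - w) + 2 * dotv (v - w) (z - w).
Proof.
rewrite /sqnorm /dotv -sumrB mulr_sumr -big_split /=.
by apply: eq_bigr => i _; rewrite !mxE; ring.
Qed.

End EuclideanIdentities.

Section InexactProjection.
Variables (R : realType) (n : nat) (C : set 'rV[R]_n).
Variables (gamma theta lambda : R).
Variable phi : 'rV[R]_n -> 'rV[R]_n -> 'rV[R]_n -> R.
Variables (u v w : 'rV[R]_n).
Hypothesis theta_lt_half : theta < 1 / 2.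
Hypothesis phi_tol : rel_err_tol gamma theta lambda phi.
Hypothesis w_proj : inexact_proj C phi u v w.

Lemma inexact_proj_dist z : C z ->
  sqnorm (w - z) <= sqnorm (v - z) - sqnorm (v - w) + 2 * phi u v w.
Proof.
move=> Cz; have [_ /(_ z Cz) proj_ineq] := w_proj.
rewrite (sqnorm_three_point v) lerD2l ler_pM2l //; lra.
Qed.

(* Since theta < 1/2, the gain -|v-w|^2 absorbs the theta-part of the
   tolerance, leaving only the gamma- and lambda-parts. *)
Lemma inexact_proj_dist_tol z : C z ->
  sqnorm (w - z) <= sqnorm (v - z)
    + 2 * gamma * sqnorm (v - u) + 2 * lambda * sqnorm (w - u).
Proof.
move=> /inexact_proj_dist dist_le.
have [_ phi_le] := phi_tol u v w; rewrite (sqnormBC w v) in phi_le.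
have D_ge0 := sqnorm_ge0 (v - w).
have thetaD : theta * sqnorm (v - w) <= 1 / 2 * sqnorm (v - w).
  by apply: ler_wpM2r => //; exact: ltW.
lra.
Qed.

Lemma inexact_proj_dist_anchor : C u ->
  (1 - 2 * lambda) * sqnorm (w - u) <= (1 + 2 * gamma) * sqnorm (v - u).
Proof. by move=> /inexact_proj_dist_tol; lra. Qed.

End InexactProjection.

Lemma eliminate_anchor (R : realFieldType) (gamma lambda A B E F : R) :
  0 <= lambda -> lambda < 1 / 2 ->
  A <= B + 2 * gamma * F + 2 * lambda * E ->
  (1 - 2 * lambda) * E <= (1 + 2 * gamma) * F ->
  A <= B + (2 * gamma + 2 * lambda) / (1 - 2 * lambda) * F.
Proof.
move=> l0 l1 A_le E_le.
have k0 : 0 < 1 - 2 * lambda by lra.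
have E_bound : E <= (1 + 2 * gamma) * F / (1 - 2 * lambda).
  by rewrite ler_pdivlMr // mulrC.
have lE : 2 * lambda * E <= 2 * lambda * ((1 + 2 * gamma) * F / (1 - 2 * lambda)).
  by apply: ler_wpM2l => //; lra.
have -> : (2 * gamma + 2 * lambda) / (1 - 2 * lambda) * F
    = 2 * gamma * F + 2 * lambda * ((1 + 2 * gamma) * F / (1 - 2 * lambda)).
  by field; lra.
lra.
Qed.

Theorem lemma6 (R : realType) (n : nat) (C : set 'rV[R]_n)
  (v u w : 'rV[R]_n) (gamma theta lambda : R)
  (phi : 'rV[R]_n -> 'rV[R]_n -> 'rV[R]_n -> R) :
  C !=set0 -> closed C -> convex_set C ->
  C u ->
  0 <= gamma -> 0 <= theta -> theta < 1 / 2 -> 0 <= lambda -> lambda < 1 / 2 ->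
  rel_err_tol gamma theta lambda phi ->
  inexact_proj C phi u v w ->
  forall x, C x ->
    sqnorm (w - x) <= sqnorm (v - x)
      + (2 * gamma + 2 * lambda) / (1 - 2 * lambda) * sqnorm (v - u).
Proof.
move=> _ _ _ Cu _ _ theta_lt_half lambda_ge0 lambda_lt_half phi_tol w_proj x Cx.
apply: (eliminate_anchor lambda_ge0 lambda_lt_half).
- exact: (inexact_proj_dist_tol theta_lt_half phi_tol w_proj Cx).
- exact: (inexact_proj_dist_anchor theta_lt_half phi_tol w_proj Cu).
Qed.
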